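(* Let $P=(N,L)$ be a random filtration pair for a random isolated invariant set $S$ of a random homeomorphism $\varphi$. Then the random pointed space map $\varphi_P(\omega,\cdot):N_L(\omega)\to N_L(\theta\omega)$ preserves base points, satisfies $[L(\omega)]\in\mathrm{int}\,\big(\varphi_P(\omega,\cdot)^{-1}([L(\theta\omega)])\big)$, $\varphi_P(\omega,\cdot)$ is continuous for each $\omega$, and $\varphi_P(\cdot,x)$ is measurable.
   Context: Let $(\Omega,\mathscr F,\mathbb P)$ be a probability space and $\theta:\Omega\to\Omega$ an invertible bimeasurable map preserving $\mathbb P$; write $\theta_n=\theta^n$. Let $(X,d_X)$ be a locally compact separable complete metric space. A random homeomorphism is a map $\varphi:\Omega\times X\to X$ with $\varphi(\cdot,x)$ measurable for every $x$ and $\varphi(\omega,\cdot)$ a homeomorphism for every $\omega$; iterates: $\varphi^n(\omega,\cdot)=\varphi(\theta_{n-1}\omega,\cdot)\circ\cdots\circ\varphi(\omega,\cdot)$ ($n>0$), $\varphi^0=\mathrm{id}_X$, $\varphi^n(\omega,\cdot)=\varphi(\theta_n\omega,\cdot)^{-1}\circ\cdots\circ\varphi(\theta_{-1}\omega,\cdot)^{-1}$ ($n<0$). A multifunction $D$ with compact values is a random compact set if $\omega\mapsto\mathrm{dist}_X(x,D(\omega))$ is measurable for each $x$. $\mathrm{Inv}A(\omega)=\{x\in A(\omega):\varphi^n(\omega,x)\in A(\theta_n\omega)\ \forall n\in\mathbb Z\}$. A random compact set $N$ is a random isolating neighborhood if $\mathrm{Inv}N(\omega)\subset\mathrm{int}N(\omega)$;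 $S$ is a random isolated invariant set if $S=\mathrm{Inv}N$ for such $N$. Exit set: $N^-(\omega)=\{x\in N(\omega):\varphi(\omega,x)\notin\mathrm{int}N(\theta\omega)\}$. A random neighborhood of $A$ in $N$ is a random set $W\subset N$ with $A(\omega)$ in the interior of $W(\omega)$ relative to $N(\omega)$. A random filtration pair for $S$ is a pair $(N,L)$ with $N$ a random isolating neighborhood, $S=\mathrm{Inv}N$, $L\subset N$ random compact, $N=\mathrm{cl}(\mathrm{int}N)$, $L=\mathrm{cl}(\mathrm{int}L)$, such that $\mathrm{cl}(N\setminus L)$ is a random isolating neighborhood of $S$ (i.e. with $\mathrm{Inv}\,\mathrm{cl}(N\setminus L)=S$), $L$ is a random neighborhood of $N^-$ in $N$, and $\varphi(\omega,L(\omega))\cap\mathrm{cl}(N(\theta\omega)\setminus L(\theta\omega))=\emptyset$. The random pointed space $N_L(\omega)$ is the quotient $N(\omega)/L(\omega)$ with the collapsed point $[L(\omega)]$ as base point (if $L(\omega)=\emptyset$, $N_L(\omega)=N(\omega)\cup\{[\emptyset]\}$ with an isolated base point); $p(\omega,\cdot):N(\omega)\to N_L(\omega)$ is the quotient map. The random pointed space map associated to $P$ is $\varphi_P(\omega,x)=[L(\theta\omega)]$ if $x=[L(\omega)]$ or $\varphi(\omega,x)\notin N(\theta\omega)$, and $\varphi_P(\omega,x)=p(\theta\omega,\varphi(\omega,x))$ otherwise. *)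

From HB Require Import structures.
From mathcomp Require Import all_boot all_order all_algebra.
From mathcomp Require Import all_classical all_reals all_analysis measurable_realfun.
Set Implicit Arguments.
Unset Strict Implicit.
Unset Printing Implicit Defensive.
Import Order.TTheory GRing.Theory Num.Theory.
Local Open Scope classical_set_scope.
Local Open Scope ring_scope.

Section RandomDynamics.
Context {R : realType} {d : measure_display} {Omega : measurableType d}
        {X : metricType R}.

Definition borelX (B : set X) : Prop := <<s [set U : set X | open U] >> B.

Definition measurable_to_X (f : Omega -> X) : Prop :=
  forall B, borelX B -> measurable (f @^-1` B).

(** dist_X(x, D) in the extended reals (+oo for D empty). *)
Definition distX (x : X) (D : set X) : \bar R :=
  ereal_inf [set (mdist x y)%:E | y in D].

Definition random_compact (D : Omega -> set X) : Prop :=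
  (forall w, compact (D w)) /\
  (forall x, measurable_fun [set: Omega] (fun w => distX x (D w))).

Definition thetaZ (theta thetainv : Omega -> Omega) (n : int) (w : Omega) :=
  match n with
  | Posz k => iter k theta w
  | Negz k => iter k.+1 thetainv w
  end.

Fixpoint phi_pos (theta : Omega -> Omega) (phi : Omega -> X -> X)
    (k : nat) (w : Omega) (x : X) : X :=
  match k with
  | 0 => x
  | k'.+1 => phi (iter k' theta w) (phi_pos theta phi k' w x)
  end.

(** phi^{-k} : phi(theta_{-k} w)^{-1} o ... o phi(theta_{-1} w)^{-1} *)
Fixpoint phi_neg (thetainv : Omega -> Omega) (phiinv : Omega -> X -> X)
    (k : nat) (w : Omega) (x : X) : X :=
  match k with
  | 0 => x
  | k'.+1 => phiinv (iter k'.+1 thetainv w) (phi_neg thetainv phiinv k' w x)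
  end.

Definition phiZ (theta thetainv : Omega -> Omega) (phi phiinv : Omega -> X -> X)
    (n : int) (w : Omega) (x : X) : X :=
  match n with
  | Posz k => phi_pos theta phi k w x
  | Negz k => phi_neg thetainv phiinv k.+1 w x
  end.

Definition rInv (theta thetainv : Omega -> Omega) (phi phiinv : Omega -> X -> X)
    (A : Omega -> set X) (w : Omega) : set X :=
  [set x | A w x /\ forall n : int,
     A (thetaZ theta thetainv n w) (phiZ theta thetainv phi phiinv n w x)].

Definition random_isolating_nbhd (theta thetainv : Omega -> Omega)
    (phi phiinv : Omega -> X -> X) (N : Omega -> set X) :=
  random_compact N /\
  forall w, rInv theta thetainv phi phiinv N w `<=` interior (N w).

Definition exit_set (theta : Omega -> Omega) (phi : Omega -> X -> X) (N : Omega -> set X) w : set X :=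
  [set x | N w x /\ ~ interior (N (theta w)) (phi w x)].

Definition rel_interior (N W : set X) : set X :=
  [set x | W x /\ exists U : set X, open U /\ U x /\ N `&` U `<=` W].

(** W is a random neighborhood of A in N (W is assumed to be a random set) *)
Definition random_nbhd_in (N A W : Omega -> set X) : Prop :=
  forall w, W w `<=` N w /\ A w `<=` rel_interior (N w) (W w).

Definition random_filtration_pair (theta thetainv : Omega -> Omega)
    (phi phiinv : Omega -> X -> X)
    (S N L : Omega -> set X) : Prop :=
  random_isolating_nbhd theta thetainv phi phiinv N /\
  (forall w, S w = rInv theta thetainv phi phiinv N w) /\
  (random_compact L /\ (forall w, L w `<=` N w)) /\
  (forall w, N w = closure (interior (N w)) /\ L w = closure (interior (L w))) /\
  (random_isolating_nbhd theta thetainv phi phiinv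
        (fun w => closure (N w `\` L w)) /\
      (forall w, rInv theta thetainv phi phiinv
                   (fun w => closure (N w `\` L w)) w = S w)) /\
  random_nbhd_in N (exit_set theta phi N) L /\
  (forall w, phi w @` L w `&` closure (N (theta w) `\` L (theta w)) = set0).

(** ---- The pointed quotient space N/L ----
    A point of N_L(w) is represented in [option X]: [None] is the base point
    [L(w)], and [Some x] (x in N(w) \ L(w)) is the class of x. *)
Definition pquot (L : set X) (x : X) : option X :=
  if pselect (L x) then None else Some x.

Definition NL (N L : set X) : set (option X) := [set None] `|` (pquot L @` N).

Definition rel_open (N U : set X) : Prop :=
  exists W : set X, open W /\ U = N `&` W.

(** quotient topology on N/L (with an isolated base point when L is empty) *)
Definition qopen (N L : set X) (U : set (option X)) : Prop :=
  U `<=` NL N L /\ rel_open N (N `&` (pquot L @^-1` U)).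

Definition qinterior (N L : set X) (A : set (option X)) : set (option X) :=
  [set y | exists U, qopen N L U /\ U y /\ U `<=` A].

Definition phiP (theta : Omega -> Omega) (phi : Omega -> X -> X) (N L : Omega -> set X)
    (w : Omega) (y : option X) : option X :=
  match y with
  | None => None
  | Some x => if pselect (N (theta w) (phi w x))
              then pquot (L (theta w)) (phi w x) else None
  end.

(** measurability of an (option X)-valued map, option X carrying the
    sigma-algebra generated by {None} and the Borel sets of X (via Some) *)
Definition measurable_to_optX (f : Omega -> option X) : Prop :=
  measurable [set w | f w = None] /\
  forall B, borelX B -> measurable [set w | exists2 x, f w = Some x & B x].

End RandomDynamics.

(* Measurability: N and L are random compact, hence closed-valued, and for a
   countable dense D a point y lies in a closed K iff for every n some z in D
   has d(z, y) < 1/(n+1) and dist(z, K) < 1/(n+1); this makes the events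
   [phi(w, x) \in N(theta w)] and [phi(w, x) \in L(theta w)] measurable.
   Topology, for fixed w with f = phi(w), N' = N(theta w), L' = L(theta w):
   since f(L) misses cl(N' \ L'), the open set W = f^-1(X \ cl(N' \ L'))
   contains L and is collapsed by phi_P to the base point, and since the exit
   set lies in L, points of N \ L go into int N', where phi_P is p o f.
   Only the separability of X, the measurability of theta and of phi(., x),
   the continuity of each phi(w) and the filtration-pair axioms are used. *)

From mathcomp Require Import all_boot all_order all_algebra.
From mathcomp Require Import all_classical all_reals all_analysis measurable_realfun.
Import Order.TTheory GRing.Theory Num.Theory.
Local Open Scope classical_set_scope.
Local Open Scope ring_scope.

Lemma metric_ball_open (R : realType) (X : metricType R) (x : X) (r : R) :
  open (ball x r).
Proof.
rewrite openE => y; rewrite ballEmdist /= => xy; apply/nbhs_ballP.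
exists (r - mdist x y); first by rewrite /= subr_gt0.
move=> z; rewrite !ballEmdist /= ltrBrDl => yz.
exact: le_lt_trans (metric_triangle x y z) yz.
Qed.

Lemma countable_bigcup_measurable d (T : measurableType d) (I : Type)
    (D : set I) (F : I -> set T) :
  countable D -> (forall i, D i -> measurable (F i)) ->
  measurable (\bigcup_(i in D) F i).
Proof.
move=> cD mF; rewrite bigcup_set_type.
apply: countable_bigcupT_measurable => [|[i Di]]; last exact/mF/set_mem.
by rewrite (eq_countable (card_setT D)).
Qed.

Section DenseApproximation.
Context {R : realType} {X : metricType R} (D : set X).
Hypothesis dense_D : closure D = [set: X].

Lemma closed_mem_dense (K : set X) (x : X) : closed K ->
  K x <-> forall n : nat, exists2 z, D z &
    mdist z x < n.+1%:R^-1 /\ (distX z K < (n.+1%:R^-1)%:E)%E.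
Proof.
move=> cK; split => [Kx n|approx].
  have /(_ (ball x n.+1%:R^-1)) [|z [Dz xz]] : closure D x by rewrite dense_D.
    by apply: nbhsx_ballx; rewrite invr_gt0.
  rewrite ballEmdist /= metric_sym in xz.
  exists z => //; split => //.
  rewrite (@le_lt_trans _ _ (mdist z x)%:E) ?lte_fin //.
  by apply: ge_ereal_inf; exists (mdist z x)%:E => //; exists x.
apply: cK => B /nbhs_ballP [e /= e0 eB].
have [n _ /(_ n (leqnn n)) ne] :=
  near_infty_natSinv_lt (PosNum (divr_gt0 e0 (ltr0n _ 2))).
have [z Dz [zx zK]] := approx n.
have [_ [y Ky <-]] := ereal_inf_lt zK; rewrite lte_fin => zy.
exists y; split => //; apply: eB; rewrite ballEmdist /=.
rewrite (le_lt_trans (metric_triangle _ z _)) // [e]splitr ltrD //.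
  by rewrite metric_sym (lt_trans zx).
exact: lt_trans zy ne.
Qed.

End DenseApproximation.

Section PointedQuotient.
Context {R : realType} {X : metricType R}.
Implicit Types (N L : set X) (x y : X).

Lemma pquot_in {L x} : L x -> pquot L x = None.
Proof. by rewrite /pquot; case: pselect. Qed.

Lemma pquot_notin {L x} : ~ L x -> pquot L x = Some x.
Proof. by rewrite /pquot; case: pselect. Qed.

Lemma pquot_Some L x y : pquot L x = Some y -> x = y.
Proof. by rewrite /pquot; case: pselect => // _ []. Qed.

Lemma guarded_pquot_None (P : Prop) L x :
  (if pselect P then pquot L x else None) = None <-> ~ P \/ L x.
Proof.
case: pselect => [p|np]; last by split => // _; left.
rewrite /pquot; case: pselect => [Lx|nLx]; first by split => // _; right.
by split => // -[].
Qed.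

Lemma guarded_pquot_Some (P : Prop) L x y :
  (if pselect P then pquot L x else None) = Some y <-> [/\ P, ~ L x & x = y].
Proof.
case: pselect => [p|np]; last by split => // -[].
rewrite /pquot; case: pselect => [Lx|nLx]; first by split => // -[].
by split => [[<-]|[_ _ <-]].
Qed.

End PointedQuotient.

Lemma random_compact_comp {R : realType} {d : measure_display}
    {Omega : measurableType d} {X : metricType R}
    {theta : Omega -> Omega} {K : Omega -> set X} :
  measurable_fun [set: Omega] theta -> random_compact K ->
  random_compact (K \o theta).
Proof.
move=> mtheta [cK mK]; split => [w|x]; first exact: cK.
exact: measurableT_comp (mK x) mtheta.
Qed.

Lemma measurable_to_optX_None {R : realType} {d : measure_display}
    {Omega : measurableType d} {X : metricType R} :
  measurable_to_optX (fun _ : Omega => @None X).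
Proof.
split => [|B _].
  by rewrite (_ : [set _ | _] = setT) //; apply/seteqP; split.
by rewrite (_ : [set _ | _] = set0) //; apply/seteqP; split => // w [].
Qed.

Section RandomCompactMembership.
Context {R : realType} {d : measure_display} {Omega : measurableType d}
  {X : metricType R} {D : set X}.
Hypotheses (countable_D : countable D) (dense_D : closure D = [set: X]).

Lemma measurable_mem_random_compact {K : Omega -> set X} {g : Omega -> X} :
  random_compact K -> measurable_to_X g -> measurable [set w | K w (g w)].
Proof.
move=> [cK mK] mg.
have cK' w : closed (K w) := compact_closed (@metric_hausdorff R X) (cK w).
have -> : [set w | K w (g w)] = \bigcap_n \bigcup_(z in D)
    (g @^-1` ball z n.+1%:R^-1 `&`
     [set w | (distX z (K w) < (n.+1%:R^-1)%:E)%E]).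
  apply/seteqP; split => w; rewrite /= (closed_mem_dense D dense_D _ _ (cK' w)).
  - move=> approx n _; have [z Dz []] := approx n.
    by exists z; rewrite ?ballEmdist.
  - move=> approx n; have [z Dz []] := approx n I.
    by rewrite ballEmdist; exists z.
apply: bigcapT_measurable => n; apply: countable_bigcup_measurable => // z _.
apply: measurableI.
  by apply: mg; apply: sub_sigma_algebra; exact: metric_ball_open.
by rewrite -[X in measurable X]setTI; exact: emeasurable_fun_infty_o.
Qed.

Lemma measurable_to_optX_guarded_pquot {K K' : Omega -> set X}
    {g : Omega -> X} :
  random_compact K -> random_compact K' -> measurable_to_X g ->
  measurable_to_optX
    (fun w => if pselect (K w (g w)) then pquot (K' w) (g w) else None).
Proof.
move=> rK rK' mg.
have mK := measurable_mem_random_compact rK mg.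
have mK' := measurable_mem_random_compact rK' mg.
split => [|B borelB].
  have -> : [set w | (if pselect (K w (g w)) then pquot (K' w) (g w) else None)
                     = None] = ~` [set w | K w (g w)] `|` [set w | K' w (g w)].
    by apply/seteqP; split => w /guarded_pquot_None.
  exact: measurableU (measurableC mK) mK'.
have -> : [set w | exists2 x,
      (if pselect (K w (g w)) then pquot (K' w) (g w) else None) = Some x & B x]
    = [set w | K w (g w)] `&` ~` [set w | K' w (g w)] `&` g @^-1` B.
  apply/seteqP; split => w /=.
  - by move=> [x /guarded_pquot_Some [Kw nK'w <-] Bx].
  - by move=> [[Kw nK'w] Bw]; exists (g w) => //; apply/guarded_pquot_Some.
by apply: measurableI; [apply: measurableI; [|apply: measurableC] | apply: mg].
Qed.

End RandomCompactMembership.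

Section QuotientTopology.
Context {R : realType} {X : metricType R}.
Implicit Types (N L : set X).

Lemma rel_open_trace N (P U : set X) :
  open U -> (forall x, N x -> (P x <-> U x)) -> rel_open N (N `&` P).
Proof.
move=> oU PU; exists U; split => //.
by apply/seteqP; split => x [Nx Px]; split => //; apply/(PU x Nx).
Qed.

Lemma NL_pquot N L x : N x -> NL N L (pquot L x).
Proof. by move=> Nx; right; exists x. Qed.

Lemma qopen_trace {N L} {V : set (option X)} : qopen N L V ->
  exists2 U : set X, open U & forall x, N x -> (V (pquot L x) <-> U x).
Proof.
move=> [_ [U [oU NVU]]]; exists U => // x Nx.
split => [Vx | Ux]; first by have [] : (N `&` U) x by rewrite -NVU.
by have [] : (N `&` (pquot L @^-1` V)) x by rewrite NVU.
Qed.

Lemma qopen_base_nbhd N L (W : set X) : open W -> L `<=` W ->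
  qopen N L ([set None] `|` pquot L @` (N `&` W)).
Proof.
move=> oW LW; split.
  by move=> _ [ ->|[x [Nx _] <-]]; [left | exact: NL_pquot].
apply: rel_open_trace oW _ => x Nx /=; split.
  have [/LW //|nLx] := pselect (L x).
  by rewrite pquot_notin // => -[//|[x' [_ Wx'] /pquot_Some <-]].
by move=> Wx; right; exists x.
Qed.

End QuotientTopology.

Definition pmap {R : realType} {X : metricType R} (f : X -> X) (N' L' : set X)
    (y : option X) : option X :=
  if y is Some x then
    if pselect (N' (f x)) then pquot L' (f x) else None
  else None.

Section PointedMap.
Context {R : realType} {X : metricType R} {f : X -> X} {N L N' L' : set X}.
Local Notation pmap := (pmap f N' L').

Lemma NL_pmap y : NL N' L' (pmap y).
Proof.
case: y => [x|] /=; last by left.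
by case: pselect => [N'fx|_] /=; [exact: NL_pquot | left].
Qed.

Hypotheses (f_cont : continuous f) (N'_closed : closed N').
Hypothesis image_L_disjoint : f @` L `&` closure (N' `\` L') = set0.
Hypothesis exit_in_L : forall x, N x -> ~ L x -> interior N' (f x).

Let W := f @^-1` ~` closure (N' `\` L').

Let W_open : open W.
Proof. exact/(continuousP _).1/closed_openC/closed_closure. Qed.

Let L_sub_W : L `<=` W.
Proof.
move=> x Lx cl_fx.
have : (f @` L `&` closure (N' `\` L')) (f x) by split => //; exists x.
by rewrite image_L_disjoint.
Qed.

Let W_image_L' {x} : W x -> N' (f x) -> L' (f x).
Proof.
move=> Wx N'fx; apply: contrapT => nL'fx; apply: Wx; exact: subset_closure.
Qed.

Let pmap_pquot_W x : W x -> pmap (pquot L x) = None.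
Proof.
move=> Wx; have [Lx|nLx] := pselect (L x); first by rewrite pquot_in.
rewrite pquot_notin //=; apply/guarded_pquot_None.
by have [N'fx|] := pselect (N' (f x)); [right; exact: W_image_L' | left].
Qed.

Lemma qinterior_pmap_base :
  qinterior N L (NL N L `&` (pmap @^-1` [set None])) None.
Proof.
exists ([set None] `|` pquot L @` (N `&` W)); split.
  exact: qopen_base_nbhd.
split; first by left.
move=> _ [ ->|[x [Nx Wx] <-]]; first by split; [left|].
by split; [exact: NL_pquot | exact: pmap_pquot_W].
Qed.

Let f_open (A : set X) : open A -> open (f @^-1` A).
Proof. exact: (continuousP f).1 f_cont A. Qed.

Lemma qopen_pmap_preimage (V : set (option X)) :
  qopen N' L' V -> qopen N L (NL N L `&` (pmap @^-1` V)).
Proof.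
move=> qV; have [U oU VU] := qopen_trace qV.
split; first by move=> y [].
have preimE x : N x ->
    ((pquot L @^-1` (NL N L `&` (pmap @^-1` V))) x <-> V (pmap (pquot L x))).
  by move=> Nx; split => [[]//|Vx]; split => //; exact: NL_pquot.
have [V0|nV0] := pselect (V None).
- apply: (@rel_open_trace _ _ _ _ (W `|` f @^-1` U `|` f @^-1` ~` N')).
    apply: openU; first by apply: openU => //; exact: f_open.
    exact/f_open/closed_openC.
  move=> x Nx; rewrite preimE //.
  have [Lx|nLx] := pselect (L x).
    by rewrite pquot_in //; split => // _; left; left; exact: L_sub_W.
  rewrite pquot_notin //=; case: pselect => [N'fx|nN'fx] /=; last first.
    by split => // _; right.
  rewrite VU //; split => [Ufx|[[Wx|//]|//]]; first by left; right.
  by rewrite -VU // pquot_in //; exact: W_image_L'.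
- apply: (@rel_open_trace _ _ _ _ (f @^-1` (U `&` interior N'))).
    exact/f_open/(openI oU)/open_interior.
  move=> x Nx; rewrite preimE //.
  have [Lx|nLx] := pselect (L x).
    rewrite pquot_in //; split => [/nV0 //|[Ufx /interior_subset N'fx]] /=.
    by rewrite -(pquot_in (W_image_L' (L_sub_W _ Lx) N'fx)) VU.
  rewrite pquot_notin //=; case: pselect => [N'fx|nN'fx] /=; last first.
    by split => // -[_ /interior_subset].
  by rewrite VU //; split => [Ufx|[]//]; split => //; exact: exit_in_L.
Qed.

End PointedMap.

Lemma nbhd_exit_set_interior {R : realType} {d : measure_display}
    {Omega : measurableType d} {X : metricType R} {theta : Omega -> Omega}
    {phi : Omega -> X -> X} {N L : Omega -> set X} :
  random_nbhd_in N (exit_set theta phi N) L ->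
  forall w x, N w x -> ~ L w x -> interior (N (theta w)) (phi w x).
Proof.
move=> nbhdL w x Nx nLx; apply: contrapT => not_int; apply: nLx.
by have [_ /(_ x (conj Nx not_int)) []] := nbhdL w.
Qed.

Theorem mainTheorem6 (R : realType) (d : measure_display)
  (Omega : measurableType d) (P : probability Omega R)
  (theta thetainv : Omega -> Omega)
  (X : metricType R)
  (phi phiinv : Omega -> X -> X)
  (S N L : Omega -> set X) :
  (* theta : invertible, bimeasurable, P-preserving *)
  cancel theta thetainv -> cancel thetainv theta ->
  measurable_fun [set: Omega] theta -> measurable_fun [set: Omega] thetainv ->
  (forall A, measurable A -> P (theta @^-1` A) = P A) ->
  (* X : locally compact, separable, complete metric space *)
  locally_compact [set: X] ->
  (exists D : set X, countable D /\ closure D = [set: X]) ->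
  (forall F : set_system X, ProperFilter F -> cauchy F -> exists x : X, F --> x) ->
  (* phi : random homeomorphism, phiinv w the inverse of phi w *)
  (forall x, measurable_to_X (fun w => phi w x)) ->
  (forall w, cancel (phi w) (phiinv w) /\ cancel (phiinv w) (phi w)) ->
  (forall w, continuous (phi w) /\ continuous (phiinv w)) ->
  (* S random isolated invariant set and (N, L) a random filtration pair *)
  (exists N0, random_isolating_nbhd theta thetainv phi phiinv N0 /\
              forall w, S w = rInv theta thetainv phi phiinv N0 w) ->
  random_filtration_pair theta thetainv phi phiinv S N L ->
  (forall w,
     (* phi_P(w,.) maps N_L(w) to N_L(theta w) and preserves base points *)
     (forall y, NL (N w) (L w) y ->
        NL (N (theta w)) (L (theta w)) (phiP theta phi N L w y)) /\
     phiP theta phi N L w None = None /\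
     (* [L(w)] is in the interior of phi_P(w,.)^{-1}([L(theta w)]) *)
     qinterior (N w) (L w)
       (NL (N w) (L w) `&` (phiP theta phi N L w @^-1` [set None])) None /\
     (* continuity of phi_P(w,.) : N_L(w) -> N_L(theta w) *)
     (forall V, qopen (N (theta w)) (L (theta w)) V ->
        qopen (N w) (L w) (NL (N w) (L w) `&` (phiP theta phi N L w @^-1` V)))) /\
  (* measurability of phi_P(., y) *)
  (forall y : option X, measurable_to_optX (fun w => phiP theta phi N L w y)).
Proof.
move=> _ _ mtheta _ _ _ [D [countable_D dense_D]] _ mphi _ phi_cont _.
move=> [[[cN mN] _] [_ [[[cL mL] _] [_ [_ [nbhdL disjointL]]]]]].
have exit_interior := nbhd_exit_set_interior nbhdL.
split=> [w|[x|]]; last exact: measurable_to_optX_None.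
  have N'_closed := compact_closed (@metric_hausdorff R X) (cN (theta w)).
  split; first by move=> y _; exact: NL_pmap.
  split=> //; split.
    exact: qinterior_pmap_base (phi_cont w).1 (disjointL w).
  exact: qopen_pmap_preimage (phi_cont w).1 N'_closed (disjointL w)
    (exit_interior w).
exact: (measurable_to_optX_guarded_pquot countable_D dense_D
  (random_compact_comp mtheta (conj cN mN))
  (random_compact_comp mtheta (conj cL mL)) (mphi x)).
Qed.
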